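(* Let $n\ge 4$ and $r_1\ge r_2\ge\cdots\ge r_n>0$. If $r_4+\cdots+r_n<r_3$, then there exists a homothetic packing of $n$ cubes with radii $r_1,\ldots,r_n$ and at least $4n-11$ face-to-face contacts (and hence more than $3n-3$ face-to-face contacts when $n\ge 9$).
   Context: Let $C=\{(x,y,z):-1\le x,y,z\le 1\}\subset\mathbb{R}^3$. A homothetic cube packing with radii $r_1,\ldots,r_n$ is a set $\{C_1,\ldots,C_n\}$ with $C_i=r_iC+p_i$, $p_i\in\mathbb{R}^3$, whose interiors are pairwise disjoint. A face-to-face contact is an unordered pair $\{i,j\}$, $i\ne j$, such that $C_i\cap C_j$ is a $2$-dimensional convex set. *)

From HB Require Import structures.
From mathcomp Require Import all_boot all_order all_algebra.
From mathcomp Require Import all_classical all_reals all_analysis.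
From mathcomp Require Import matrix_topology matrix_normedtype.
Import numFieldNormedType.Exports.
Set Implicit Arguments. Unset Strict Implicit. Unset Printing Implicit Defensive.
Import Order.TTheory GRing.Theory Num.Theory.
Local Open Scope ring_scope.
Local Open Scope classical_set_scope.

Definition unit_cube (R : realType) : set 'rV[R]_3 :=
  [set x | forall k : 'I_3, -1 <= x ord0 k <= 1].

Definition hcube (R : realType) (r : R) (p : 'rV[R]_3) : set 'rV[R]_3 :=
  (fun c => r *: c + p) @` @unit_cube R.

Definition aff_indep (R : realType) (k : nat) (v : 'I_k.+1 -> 'rV[R]_3) : Prop :=
  \rank (\matrix_(i < k) (v (lift ord0 i) - v ord0)) = k.

Definition convex_set3 (R : realType) (S : set 'rV[R]_3) : Prop :=
  forall x y, S x -> S y -> forall t : R, 0 <= t <= 1 -> S (t *: x + (1 - t) *: y).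

(* S is a 2-dimensional convex set: convex, its affine hull has dimension 2
   (contains 3 but not 4 affinely independent points). *)
Definition convex_dim2 (R : realType) (S : set 'rV[R]_3) : Prop :=
  convex_set3 S /\
  (exists v : 'I_3 -> 'rV[R]_3, (forall i, S (v i)) /\ aff_indep v) /\
  ~ (exists v : 'I_4 -> 'rV[R]_3, (forall i, S (v i)) /\ aff_indep v).

Definition hom_cube_packing (R : realType) (n : nat) (r : nat -> R)
    (p : nat -> 'rV[R]_3) : Prop :=
  forall i j, (i < n)%N -> (j < n)%N -> i <> j ->
    interior (hcube (r i) (p i)) `&` interior (hcube (r j) (p j)) = set0.

Definition ftf_contact (R : realType) (r : nat -> R) (p : nat -> 'rV[R]_3)
    (i j : nat) : Prop :=
  i <> j /\ convex_dim2 (hcube (r i) (p i) `&` hcube (r j) (p j)).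

From HB Require Import structures.
From mathcomp Require Import all_boot all_order all_algebra.
From mathcomp Require Import all_classical all_reals all_analysis.
From mathcomp Require Import matrix_topology matrix_normedtype.
From mathcomp Require Import lra zify.
Import numFieldNormedType.Exports.
Import Order.TTheory GRing.Theory Num.Theory.
Set Implicit Arguments. Unset Strict Implicit.
Local Open Scope ring_scope.

(* The cubes C_0 and C_2 are stacked on the plane z = 0 over the quadrant
   x, y >= 0, and C_1 stands on the side y <= 0, lifted to z >= d, where
   d = r_(n-1) is the smallest radius; so C_2 touches both C_0 and C_1.  The
   cubes C_3, ..., C_(n-1) are lined up face to face along the x-axis in the
   slot y <= 0, z <= d under C_1, C_i occupying x in [a_i, a_i + 2 r_i] with
   a_i = 2 (r_3 + ... + r_(i-1)).  As a_n < 2 r_2, the whole row stays in the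
   shadow of C_2, so each C_i with i >= 3 touches C_0 and C_2 (along y = 0),
   C_1 (along z = d) and C_(i+1): that makes 2 + 3 (n - 3) + (n - 4) = 4 n - 11
   contacts. *)

Ltac norm_lra :=
  rewrite ?ltr_norml ?ler_normr;
  first [lra | rewrite ger0_norm; lra | rewrite ler0_norm; lra].

Section Boxes.
Variable R : realType.
Local Open Scope classical_set_scope.
Implicit Types (lo hi : 'I_3 -> R) (a b r s : R) (p q : 'rV[R]_3).

Definition box lo hi : set 'rV[R]_3 := [set x | forall k, lo k <= x ord0 k <= hi k].

Lemma hcube_box r p : 0 < r ->
  hcube r p = box (fun k => p ord0 k - r) (fun k => p ord0 k + r).
Proof.
move=> r_gt0; apply/seteqP; split => x.
  by case=> c c_in <- k; rewrite !mxE; have := c_in k; move=> /andP[? ?]; nra.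
move=> x_in; exists (r^-1 *: (x - p)).
  move=> k; rewrite !mxE; have /andP[? ?] := x_in k.
  have ? : r * r^-1 = 1 by rewrite mulfV ?gt_eqF.
  have ? : 0 < r^-1 by rewrite invr_gt0.
  by apply/andP; split; nra.
by rewrite scalerA mulfV ?gt_eqF // scale1r addrNK.
Qed.

Lemma setI_box lo1 hi1 lo2 hi2 :
  box lo1 hi1 `&` box lo2 hi2 =
  box (fun k => Num.max (lo1 k) (lo2 k)) (fun k => Num.min (hi1 k) (hi2 k)).
Proof.
apply/seteqP; split => x.
  by case=> in1 in2 k; have := in1 k; have := in2 k; rewrite ge_max le_min; lra.
by move=> x_in; split=> k; have := x_in k; rewrite ge_max le_min; lra.
Qed.

Lemma box_convex lo hi : convex_set3 (box lo hi).
Proof.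
move=> x y x_in y_in t /andP[t_ge0 t_le1] k; rewrite !mxE.
by have := x_in k; have := y_in k; move=> /andP[? ?] /andP[? ?]; apply/andP; split; nra.
Qed.

Lemma row_free_scaled_deltas m n (col : 'I_m -> 'I_n) (c : 'I_m -> R) :
  injective col -> (forall i, c i != 0) ->
  row_free (\matrix_i (c i *: delta_mx ord0 (col i))).
Proof.
move=> col_inj c_neq0; apply/row_freeP.
exists (\matrix_(k, i) (if k == col i then (c i)^-1 else 0)).
apply/matrixP => i i'; rewrite !mxE (bigD1 (col i)) //= big1 => [|k /negbTE k_neq].
  by rewrite !mxE !eqxx (inj_eq col_inj) addr0 mulr1; case: eqP => [->|]; rewrite ?mulfV ?mulr0.
by rewrite !mxE eq_sym k_neq mulr0 mul0r.
Qed.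

Lemma flat_box_aff_indep3 lo hi k0 :
  (forall k, lo k <= hi k) -> (forall k, k != k0 -> lo k < hi k) ->
  exists v : 'I_3 -> 'rV[R]_3, (forall i, box lo hi (v i)) /\ aff_indep v.
Proof.
move=> lo_hi lt_off.
pose step (t : 'I_2) := (hi (lift k0 t) - lo (lift k0 t)) *: delta_mx ord0 (lift k0 t) : 'rV[R]_3.
exists (fun i : 'I_3 => \row_k lo k + if unlift ord0 i is Some t then step t else 0); split.
  move=> i k; rewrite !mxE; case: (unlift ord0 i) => [t|]; rewrite ?mxE ?addr0 ?lexx ?lo_hi //.
  by rewrite eqxx; case: eqP => [->|_]; rewrite ?mulr1 ?mulr0;
    have := lo_hi k; have := lo_hi (lift k0 t); lra.
apply/eqP; rewrite (_ : \matrix_i _ = \matrix_t step t).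
  apply: row_free_scaled_deltas; first exact: lift_inj.
  by move=> t; rewrite subr_eq0 gt_eqF // lt_off // eq_sym neq_lift.
by apply/matrixP => t k; rewrite !mxE liftK unlift_none !mxE addr0 addrC addKr.
Qed.

Lemma coord_hyperplane_no_aff_indep4 (S : set 'rV[R]_3) k c :
  (forall x, S x -> x ord0 k = c) ->
  ~ exists v : 'I_4 -> 'rV[R]_3, (forall i, S (v i)) /\ aff_indep v.
Proof.
move=> on_plane [v [v_in /eqP]]; rewrite -/(row_free _) row_free_unit unitmxE (expand_det_col _ k) big1 ?unitr0 // => i _.
by rewrite !mxE !on_plane // subrr mul0r.
Qed.

Lemma flat_box_dim2 lo hi k0 : lo k0 = hi k0 ->
  (forall k, k != k0 -> lo k < hi k) -> convex_dim2 (box lo hi).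
Proof.
move=> flat lt_off; split; [exact: box_convex | split].
  apply: (flat_box_aff_indep3 _ lt_off) => k.
  by case: (eqVneq k k0) => [->|/lt_off/ltW]; rewrite ?flat.
apply: (@coord_hyperplane_no_aff_indep4 _ k0 (lo k0)) => x /(_ k0).
by rewrite -flat; lra.
Qed.

Lemma max_sub_lt_min_add a b r s : 0 < r -> 0 < s ->
  (Num.max (a - r) (b - s) < Num.min (a + r) (b + s)) = (`|a - b| < r + s).
Proof. by move=> *; rewrite gt_max !lt_min ltr_norml; apply/idP/idP; lra. Qed.

Lemma max_sub_le_min_add a b r s : 0 < r -> 0 < s ->
  (Num.max (a - r) (b - s) <= Num.min (a + r) (b + s)) = (`|a - b| <= r + s).
Proof. by move=> *; rewrite ge_max !le_min ler_norml; apply/idP/idP; lra. Qed.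

Lemma max_sub_eq_min_add a b r s : 0 < r -> 0 < s -> `|a - b| = r + s ->
  Num.max (a - r) (b - s) = Num.min (a + r) (b + s).
Proof.
move=> r_gt0 s_gt0 dist; apply/le_anti; rewrite max_sub_le_min_add ?dist //= ge_min !le_max.
by move: dist; case: ler0P => _; lra.
Qed.

Lemma hcube_face_contact r s p q k0 : 0 < r -> 0 < s ->
  `|p ord0 k0 - q ord0 k0| = r + s ->
  (forall k, k != k0 -> `|p ord0 k - q ord0 k| < r + s) ->
  convex_dim2 (hcube r p `&` hcube s q).
Proof.
move=> r_gt0 s_gt0 touch overlap; rewrite !hcube_box // setI_box.
apply: (flat_box_dim2 (k0 := k0)) => [|k /overlap]; first exact: max_sub_eq_min_add.
by rewrite max_sub_lt_min_add.
Qed.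

Lemma interior_coord_separated (S T : set 'rV[R]_3) k c :
  (forall x, S x -> x ord0 k <= c) -> (forall x, T x -> c <= x ord0 k) ->
  interior S `&` interior T = set0.
Proof.
move=> below above; apply/seteqP; split => // x [/= intS intT].
have shift0 : (x + t *: delta_mx ord0 k) @[t --> 0] --> x.
  rewrite -[x in _ --> x]addr0; apply: cvgD; first exact: cvg_cst.
  rewrite -[X in _ --> X](scale0r (delta_mx ord0 k)); apply: cvgZr_tmp; exact: cvg_id.
have shift : (x + t *: delta_mx ord0 k) @[t --> 0^'+] --> x.
  exact: cvg_within_filter shift0.
have [t [/below + t_gt0]] : exists t, S (x + t *: delta_mx ord0 k) /\ 0 < t.
  apply: (@filter_ex _ (0 : R)^'+); near=> t; split; last by near: t; exact: nbhs_right_gt.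
  by near: t; exact: shift.
have := above _ (nbhs_singleton intT); rewrite !mxE !eqxx /=; lra.
Unshelve. all: by end_near. Qed.

Lemma hcube_interiors_disjoint r s p q k : 0 < r -> 0 < s ->
  r + s <= `|p ord0 k - q ord0 k| ->
  interior (hcube r p) `&` interior (hcube s q) = set0.
Proof.
move=> r_gt0 s_gt0; rewrite ler_normr => /orP[] apart.
  rewrite setIC; apply: (interior_coord_separated (k := k) (c := q ord0 k + s)).
    by move=> x; rewrite hcube_box // => /(_ k) /andP[].
  by move=> x; rewrite hcube_box // => /(_ k) /andP[+ _]; lra.
apply: (interior_coord_separated (k := k) (c := p ord0 k + r)).
  by move=> x; rewrite hcube_box // => /(_ k) /andP[].
by move=> x; rewrite hcube_box // => /(_ k) /andP[+ _]; lra.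
Qed.
End Boxes.

Lemma hom_cube_packing_of_separated (R : realType) n (r : nat -> R)
    (p : nat -> 'rV[R]_3) :
  (forall i, (i < n)%N -> 0 < r i) ->
  (forall i j, (i < j < n)%N -> exists k, r i + r j <= `|p i ord0 k - p j ord0 k|) ->
  hom_cube_packing n r p.
Proof.
move=> r_gt0 separated i j i_lt j_lt i_neq_j.
wlog lt_ij : i j i_lt j_lt i_neq_j / (i < j)%N => [sym|].
  case: (ltngtP i j) => [lt_ij|gt_ij|//]; first exact: sym.
  by rewrite setIC; apply: sym => // /esym.
have [k apart] := separated i j ltac:(by rewrite lt_ij).
exact: hcube_interiors_disjoint (r_gt0 _ i_lt) (r_gt0 _ j_lt) apart.
Qed.

Lemma card_ord_pairs n (s : seq (nat * nat)) : uniq s ->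
  {in s, forall x, (x.1 < n)%N && (x.2 < n)%N} ->
  #|[set e : 'I_n * 'I_n | (val e.1, val e.2) \in s]| = size s.
Proof.
move=> s_uniq s_bounded; set E := [set e | _].
pose f (e : 'I_n * 'I_n) := (val e.1, val e.2).
have f_inj : injective f by move=> [i j] [i' j'] [/val_inj -> /val_inj ->].
rewrite cardE -(size_map f); apply/perm_size/uniq_perm => //.
  by rewrite map_inj_uniq ?enum_uniq.
move=> [i j]; apply/mapP/idP => [[e] |ij_in]; first by rewrite mem_enum inE => ? ->.
have /andP[i_lt j_lt] := s_bounded _ ij_in.
by exists (Ordinal i_lt, Ordinal j_lt); rewrite // mem_enum inE.
Qed.

Section ContactPairs.
Variable n : nat.

Definition contact_partners i : seq nat :=
  if (i < 2)%N then iota 2 (n - 2) else if i == 2%N then iota 3 (n - 3) else [:: i.+1].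

Definition contact_pairs := [seq (i, j) | i <- iota 0 n.-1, j <- contact_partners i].

Lemma contact_pairs_uniq : uniq contact_pairs.
Proof.
apply: allpairs_uniq_dep => [|i _|[i j] [i' j'] _ _ /= [-> ->] //]; first exact: iota_uniq.
by rewrite /contact_partners; case: ifP => _; rewrite ?iota_uniq //; case: ifP; rewrite ?iota_uniq.
Qed.

Lemma size_contact_pairs : (4 <= n)%N -> size contact_pairs = (4 * n - 11)%N.
Proof.
move=> n_ge4; rewrite size_allpairs_dep sumnE big_map (_ : n.-1 = 3 + (n - 4))%N; last lia.
rewrite iotaD big_cat /= !big_cons big_nil.
rewrite (eq_big_seq (fun=> 1%N)) ?sum1_size /= ?size_iota; first lia.
by move=> i; rewrite mem_iota /contact_partners => /andP[i_ge3 _]; rewrite ltnNge ltnW //= gtn_eqF.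
Qed.

Lemma contact_pairs_lt i j : (i, j) \in contact_pairs -> (i < j < n)%N.
Proof.
move=> /allpairsPdep[i' [j' [/[!mem_iota] i_lt + [-> ->]]]].
by rewrite /contact_partners; case: ifP => ?; last case: ifP => ?; rewrite ?mem_iota ?inE; lia.
Qed.

End ContactPairs.

Definition vec3 (R : realType) (x y z : R) : 'rV[R]_3 := \row_(k < 3) nth 0 [:: x; y; z] k.

Section Construction.
Variables (R : realType) (n : nat) (r : nat -> R).
Hypothesis n_ge4 : (4 <= n)%N.
Hypothesis r_noninc : forall i j, (i <= j)%N -> (j < n)%N -> r j <= r i.
Hypothesis r_gt0 : forall i, (i < n)%N -> 0 < r i.
Hypothesis tail_lt : \sum_(3 <= i < n) r i < r 2%N.

Definition offset i := 2 * \sum_(3 <= l < i) r l.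

Definition center i : 'rV[R]_3 :=
  match i with
  | 0 => vec3 (r 0%N) (r 0%N) (- r 0%N)
  | 1 => vec3 (r 1%N) (- r 1%N) (r n.-1 + r 1%N)
  | 2 => vec3 (r 2%N) (r 2%N) (r 2%N)
  | _ => vec3 (offset i + r i) (- r i) (r n.-1 - r i)
  end.

Lemma offsetS i : (3 <= i)%N -> offset i.+1 = offset i + 2 * r i.
Proof. by move=> i_ge3; rewrite /offset big_nat_recr //= mulrDr. Qed.

Lemma offset_le i j : (3 <= i)%N -> (i <= j <= n)%N -> offset i <= offset j.
Proof.
move=> i_ge3 /andP[i_le j_le]; rewrite /offset (big_cat_nat i_ge3 i_le) /= mulrDr.
rewrite lerDl mulr_ge0 // big_nat_cond sumr_ge0 // => l /andP[/andP[_ l_lt] _].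
by rewrite ltW // r_gt0 // (leq_trans l_lt).
Qed.

Lemma big_radii : [/\ 0 < r n.-1, r n.-1 <= r 2%N, r 2%N <= r 1%N & r 1%N <= r 0%N].
Proof. by split; [apply: r_gt0 | apply: r_noninc..]; lia. Qed.

Lemma small_cube_bounds i : (3 <= i < n)%N ->
  [/\ 0 <= offset i, offset i + 2 * r i < 2 * r 2%N & r n.-1 <= r i].
Proof.
move=> /andP[i_ge3 i_lt]; split; last by apply: r_noninc; lia.
  by rewrite (_ : 0 = offset 3) ?offset_le ?i_ge3 ?(ltnW i_lt) // /offset big_geq ?mulr0.
have le_n : offset i.+1 <= offset n by apply: offset_le; lia.
by rewrite -offsetS //; apply: le_lt_trans le_n _; rewrite /offset ltr_pM2l.
Qed.

Definition axis_x : 'I_3 := @Ordinal 3 0 isT.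
Definition axis_y : 'I_3 := @Ordinal 3 1 isT.
Definition axis_z : 'I_3 := @Ordinal 3 2 isT.

Lemma center_separated i j : (i < j < n)%N ->
  exists k, r i + r j <= `|center i ord0 k - center j ord0 k|.
Proof.
move=> /andP[lt_ij j_lt]; have ri := r_gt0 (ltn_trans lt_ij j_lt); have rj := r_gt0 j_lt.
have [d_gt0 d_le2 le21 le10] := big_radii.
case: i lt_ij ri => [|[|[|i]]] lt_ij ri; case: j lt_ij j_lt rj => [|[|[|j]]] //= lt_ij j_lt rj.
- by exists axis_z; rewrite !mxE /=; norm_lra.
- by exists axis_z; rewrite !mxE /=; norm_lra.
- by exists axis_y; rewrite !mxE /=; norm_lra.
- by exists axis_y; rewrite !mxE /=; norm_lra.
- by have [? ? ?] := small_cube_bounds (i := j.+3) j_lt; exists axis_z; rewrite !mxE /=; norm_lra.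
- by exists axis_y; rewrite !mxE /=; norm_lra.
have gap : offset i.+4 <= offset j.+3 by apply: offset_le; lia.
by have := offsetS (i := i.+3) isT; exists axis_x; rewrite !mxE /=; norm_lra.
Qed.

Local Ltac touch_along k :=
  split=> //; apply: (hcube_face_contact (k0 := k)) => //;
  [rewrite !mxE /=; norm_lra | case=> [[|[|[|//]]] ?] //= _; rewrite !mxE /=; norm_lra].

Lemma center_contact i j : (i, j) \in contact_pairs n -> ftf_contact r center i j.
Proof.
move=> ij_in; have /andP[lt_ij j_lt] := contact_pairs_lt ij_in.
move: ij_in => /allpairsPdep[i' [j' [_ + [ei ej]]]]; rewrite -{}ei -{}ej.
have ri := r_gt0 (ltn_trans lt_ij j_lt); have rj := r_gt0 j_lt.
have [d_gt0 d_le2 le21 le10] := big_radii.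
rewrite /contact_partners; case: i lt_ij ri => [|[|[|i]]] lt_ij ri /=.
- case: j => [|[|[|j]]] in lt_ij j_lt rj * => // /[!mem_iota] /= j_in //; first by touch_along axis_z.
  by have [? ? ?] := small_cube_bounds (i := j.+3) j_lt; touch_along axis_y.
- case: j => [|[|[|j]]] in lt_ij j_lt rj * => // /[!mem_iota] /= j_in //; first by touch_along axis_y.
  by have [? ? ?] := small_cube_bounds (i := j.+3) j_lt; touch_along axis_z.
- case: j => [|[|[|j]]] in lt_ij j_lt rj * => // /[!mem_iota] /= j_in //.
  by have [? ? ?] := small_cube_bounds (i := j.+3) j_lt; touch_along axis_y.
rewrite inE => /eqP j_eq; subst j.
have := offsetS (i := i.+3) isT; have [? ? ?] := small_cube_bounds (i := i.+3) (ltnW j_lt).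
by touch_along axis_x.
Qed.

End Construction.

Theorem proposition25 (R : realType) (n : nat) (r : nat -> R) :
  (4 <= n)%N ->
  (forall i j, (i <= j)%N -> (j < n)%N -> r j <= r i) ->
  (forall i, (i < n)%N -> 0 < r i) ->
  \sum_(3 <= i < n) r i < r 2%N ->
  exists p : nat -> 'rV[R]_3,
    hom_cube_packing n r p /\
    exists E : {set 'I_n * 'I_n},
      (4 * n - 11 <= #|E|)%N /\
      forall e, e \in E -> (e.1 < e.2)%N /\ ftf_contact r p e.1 e.2.
Proof.
move=> n_ge4 r_noninc r_gt0 tail_lt.
exists (center n r); split.
  exact: hom_cube_packing_of_separated r_gt0 (center_separated n_ge4 r_noninc r_gt0 tail_lt).
exists [set e : 'I_n * 'I_n | (val e.1, val e.2) \in contact_pairs n].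
rewrite card_ord_pairs ?size_contact_pairs ?contact_pairs_uniq //; last first.
  by move=> [i j] /contact_pairs_lt /=; lia.
split=> // e; rewrite inE => e_in; split; first by have /andP[] := contact_pairs_lt e_in.
exact: center_contact n_ge4 r_noninc r_gt0 tail_lt _ _ e_in.
Qed.
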